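(* Let $q$ be a prime power and suppose there exists a linear $(t_i,t_o,s,q)$-AONT with $2\le t_i\le t_o$. Then \[ s\le \frac{(t_o-1)(q^{t_i}-1)}{(t_i-1)(q-1)}.\]
   Context: A linear $(t_i,t_o,s,q)$-AONT is given by an invertible $s\times s$ matrix $M$ over $\mathbb{F}_q$ defining the map $\mathbf{x}\mapsto\mathbf{y}=\mathbf{x}M^{-1}$ on row vectors of $\mathbb{F}_q^s$, such that for every set $I$ of $t_i$ input coordinates and every set $J$ of $s-t_o$ output coordinates, the pair $((x_i)_{i\in I},(y_j)_{j\in J})$ takes every value in $\mathbb{F}_q^{t_i+s-t_o}$ equally often as $\mathbf{x}$ ranges over $\mathbb{F}_q^s$. Equivalently, $M$ is invertible and every $t_o\times t_i$ submatrix of $M$ has rank $t_i$. *)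

From mathcomp Require Import all_boot all_order all_algebra all_field.
Set Implicit Arguments. Unset Strict Implicit. Unset Printing Implicit Defensive.
Import GRing.Theory Num.Theory.
Local Open Scope ring_scope.

(* A linear (ti, to, s, q)-AONT over a field F: an invertible s x s matrix M
   (the map is x |-> x M^{-1}, so x = y M: rows of M are indexed by output
   coordinates, columns by input coordinates) such that every to x ti
   submatrix of M has rank ti.  A to x ti submatrix is given by injective
   row / column selections f : 'I_to -> 'I_s and g : 'I_ti -> 'I_s
   (reordering rows/columns does not change the rank). *)
Definition linear_AONT (F : fieldType) (ti to s : nat) (M : 'M[F]_s) : Prop :=
  [/\ (0 < ti)%N, (ti <= to)%N, (to <= s)%N,
      M \in unitmx &
      forall (f : 'I_to -> 'I_s) (g : 'I_ti -> 'I_s),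
        injective f -> injective g -> \rank (mxsub f g M) = ti].

From mathcomp Require Import all_boot all_order all_algebra all_field.
From mathcomp Require Import mxabelem.
Set Implicit Arguments. Unset Strict Implicit. Unset Printing Implicit Defensive.
Import GRing.Theory Num.Theory.
Local Open Scope ring_scope.

(* Restrict M to its first t_i columns and transpose, giving B : 'M_(t_i, s);
   the AONT property says that every t_o columns of B form a row-free matrix.
   Double count the pairs (u, j) with u a nonzero row vector and (u B)_j = 0.
   For a fixed u fewer than t_o columns j qualify, since otherwise u would lie
   in the left kernel of a row-free t_i x t_o submatrix; for a fixed column j
   the kernel of u |-> u B_j has dimension at least t_i - 1.  Hence
   s (q^(t_i-1) - 1) <= (t_o - 1)(q^t_i - 1), and the stated bound follows
   from (t_i - 1)(q - 1) <= q^(t_i-1) - 1. *)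

Lemma mul_pred_leq_pred_exp (q n : nat) : (n * q.-1 <= (q ^ n).-1)%N.
Proof.
case: q => [|q]; first by rewrite muln0.
rewrite -!subn1 -{2}(exp1n n) subn_exp [X in (_ <= X)%N]mulnC leq_mul2r.
apply/orP; right; rewrite -[X in (X <= _)%N]card_ord -sum1_card.
by apply: leq_sum => i _; rewrite exp1n muln1 expn_gt0.
Qed.

Section ZeroColumns.

Variables (F : fieldType) (n m k : nat) (B : 'M[F]_(n, m)).
Hypothesis B_free : forall f : 'I_k -> 'I_m, injective f -> row_free (colsub f B).

Lemma card_zero_cols_lt (u : 'rV[F]_n) :
  u != 0 -> (#|[set j | (u *m B) ord0 j == 0%R]| < k)%N.
Proof.
move=> u_neq0; rewrite ltnNge; apply/negP => k_le.
set Z := [set j | _] in k_le.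
pose f (i : 'I_k) : 'I_m := enum_val (widen_ord k_le i).
have f_inj : injective f by move=> i i' /enum_val_inj [/val_inj].
have uBf0 : u *m colsub f B = 0.
  apply/rowP => i; rewrite mulmx_colsub mxE [RHS]mxE.
  by have := enum_valP (widen_ord k_le i); rewrite inE => /eqP.
by move: u_neq0; rewrite -(mulmx_free_eq0 _ (B_free f_inj)) uBf0 eqxx.
Qed.

End ZeroColumns.

Lemma card_ker_col_ge (F : finFieldType) (n : nat) (c : 'cV[F]_n) :
  (#|F| ^ n.-1 <= #|[set u : 'rV[F]_n | (u != 0%R) && (u *m c == 0%R)]|.+1)%N.
Proof.
have -> : [set u : 'rV[F]_n | (u != 0) && (u *m c == 0)] = rowg (kermx c) :\ 0.
  by apply/setP => u; rewrite in_setD1 mem_rowg sub_kermx inE.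
have := cardsD1 0 (rowg (kermx c)); rewrite mem_rowg sub0mx add1n => <-.
rewrite card_rowg mxrank_ker; apply: leq_pexp2l; first exact: ltnW (finNzRing_gt1 F).
by rewrite -subn1 leq_sub2l // rank_leq_col.
Qed.

Lemma sum_card_rel (T U : finType) (P : pred T) (r : T -> U -> bool) :
  (\sum_(x | P x) #|[set y | r x y]| = \sum_y #|[set x | P x && r x y]|)%N.
Proof.
under eq_bigr => x _ do rewrite -sum1dep_card.
under [RHS]eq_bigr => y _ do rewrite -sum1dep_card.
exact: exchange_big_dep.
Qed.

Lemma row_free_colsub_bound (F : finFieldType) (n m k : nat) (B : 'M[F]_(n, m)) :
  (forall f : 'I_k -> 'I_m, injective f -> row_free (colsub f B)) ->
  (m * (#|F| ^ n.-1).-1 <= k.-1 * (#|F| ^ n).-1)%N.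
Proof.
move=> B_free.
have zero_cols_u : (\sum_(u : 'rV[F]_n | u != 0%R) #|[set j | (u *m B) ord0 j == 0%R]|
                    <= k.-1 * (#|F| ^ n).-1)%N.
  have card_nonzero : #|[pred u : 'rV[F]_n | u != 0]| = (#|F| ^ n).-1.
    by rewrite cardC1 card_mx mul1n.
  rewrite mulnC -card_nonzero -sum_nat_const.
  apply: leq_sum => u u_neq0; rewrite -ltnS.
  exact: leq_trans (card_zero_cols_lt B_free u_neq0) (leqSpred k).
rewrite sum_card_rel in zero_cols_u; apply: leq_trans zero_cols_u.
rewrite -[X in (X * _)%N]card_ord -sum_nat_const; apply: leq_sum => j _.
rewrite -ltnS prednK ?expn_gt0 ?(ltnW (finNzRing_gt1 F)) //.
apply: leq_trans (card_ker_col_ge (col j B)) _; rewrite ltnS subset_leq_card //.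
apply/subsetP => u; rewrite !inE colE mulmxA -colE => /andP[-> /eqP/colP/(_ ord0)].
by rewrite mxE [RHS]mxE => /eqP.
Qed.

Theorem theoremT1 (F : finFieldType) (ti to s : nat) (M : 'M[F]_s) :
  (2 <= ti)%N -> (ti <= to)%N -> linear_AONT ti to M ->
  (s%:R : rat) <= ((to - 1) * (#|F| ^ ti - 1))%:R / ((ti - 1) * (#|F| - 1))%:R.
Proof.
move=> ti_gt1 _ [_ ti_le_to to_le_s _ M_rank].
have ti_le_s : (ti <= s)%N := leq_trans ti_le_to to_le_s.
pose g := widen_ord ti_le_s.
have g_inj : injective g by move=> i i' [/val_inj].
have B_free (f : 'I_to -> 'I_s) : injective f -> row_free (colsub f (colsub g M)^T).
  move=> f_inj; rewrite (_ : colsub f _ = (mxsub f g M)^T).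
    by rewrite /row_free mxrank_tr M_rank.
  by apply/matrixP => i j; rewrite !mxE.
have bound := row_free_colsub_bound B_free.
have exp_ge := mul_pred_leq_pred_exp #|F| ti.-1.
rewrite ler_pdivlMr; last by rewrite ltr0n muln_gt0 !subn_gt0 ti_gt1 finNzRing_gt1.
rewrite -natrM ler_nat !subn1; apply: leq_trans bound.
by rewrite leq_mul2l exp_ge orbT.
Qed.
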